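(* $\mathsf{N}=\mathsf{MS4}+\Box\exists p\to\neg\Box\forall\neg\Box p=\mathsf{MS4}+\Box\forall\Diamond p\to\Diamond\forall p$, where $\mathsf{N}=\mathsf{MS4}+\Box\exists p\to\Diamond\exists\Box p$.
   Context: $\mathsf{MS4}$ is the smallest set of formulas in the classical bimodal language $\mathcal{L}_{\Box\forall}$ containing all classical tautologies, the $\mathsf{S4}$ axioms for $\Box$, the $\mathsf{S5}$ axioms for $\forall$, and $\Box\forall p\to\forall\Box p$, closed under modus ponens, substitution, $\Box$-necessitation and $\forall$-necessitation; $\Diamond=\neg\Box\neg$, $\exists=\neg\forall\neg$. For a formula $\chi$, $\mathsf{MS4}+\chi$ is the smallest set containing $\mathsf{MS4}$ and $\chi$ closed under these rules. *)

From Stdlib Require Import Bool.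

Inductive form : Type :=
| Var : nat -> form
| Bot : form
| Imp : form -> form -> form
| Box : form -> form
| All : form -> form.

Definition Neg (a : form) : form := Imp a Bot.
Definition Dia (a : form) : form := Neg (Box (Neg a)).
Definition Ex  (a : form) : form := Neg (All (Neg a)).

Fixpoint beval (v : form -> bool) (f : form) : bool :=
  match f with
  | Var n => v (Var n)
  | Bot => false
  | Imp a b => implb (beval v a) (beval v b)
  | Box a => v (Box a)
  | All a => v (All a)
  end.

(* classical tautologies of the bimodal language (substitution instances of
   propositional tautologies) *)
Definition tautology (f : form) : Prop := forall v : form -> bool, beval v f = true.

Fixpoint subst (s : nat -> form) (f : form) : form :=
  match f with
  | Var n => s n
  | Bot => Bot
  | Imp a b => Imp (subst s a) (subst s b)
  | Box a => Box (subst s a)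
  | All a => All (subst s a)
  end.

Definition p : form := Var 0.
Definition q : form := Var 1.

Inductive MS4_axiom : form -> Prop :=
| ax_K_box  : MS4_axiom (Imp (Box (Imp p q)) (Imp (Box p) (Box q)))
| ax_T_box  : MS4_axiom (Imp (Box p) p)
| ax_4_box  : MS4_axiom (Imp (Box p) (Box (Box p)))
| ax_K_all  : MS4_axiom (Imp (All (Imp p q)) (Imp (All p) (All q)))
| ax_T_all  : MS4_axiom (Imp (All p) p)
| ax_5_all  : MS4_axiom (Imp (Ex p) (All (Ex p)))
| ax_lc     : MS4_axiom (Imp (Box (All p)) (All (Box p))).

Inductive MS4plus (chi : form) : form -> Prop :=
| d_taut : forall f, tautology f -> MS4plus chi f
| d_ax : forall f, MS4_axiom f -> MS4plus chi f
| d_chi : MS4plus chi chi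
| d_mp : forall a b, MS4plus chi (Imp a b) -> MS4plus chi a -> MS4plus chi b
| d_subst : forall (s : nat -> form) f, MS4plus chi f -> MS4plus chi (subst s f)
| d_nec_box : forall f, MS4plus chi f -> MS4plus chi (Box f)
| d_nec_all : forall f, MS4plus chi f -> MS4plus chi (All f).

Definition chi_N : form := Imp (Box (Ex p)) (Dia (Ex (Box p))).
Definition chi_1 : form := Imp (Box (Ex p)) (Neg (Box (All (Neg (Box p))))).
Definition chi_2 : form := Imp (Box (All (Dia p))) (Dia (All p)).

(** Each alternative axiom is [chi_N] up to double negations inside [Box] and
    [All].  For [chi_2], substitute [~ p] for [p]
    in [chi_N] and contrapose: as [Ex] and [Dia] abbreviate [~ All ~] and
    [~ Box ~], the result is [chi_2] once the double negations are removed.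
    They can be removed under [Box] and [All] because both modalities are
    monotone in [MS4 + chi] for every [chi]. *)
From Stdlib Require Import ssreflect.

Ltac decide_tautology :=
  let v := fresh "v" in
  move=> v; rewrite /Neg /=;
  repeat match goal with
         | |- context [beval v ?a] => destruct (beval v a)
         end; reflexivity.

Lemma tautology_dneg_intro a : tautology (Imp a (Neg (Neg a))).
Proof. decide_tautology. Qed.

Lemma tautology_dneg_elim a : tautology (Imp (Neg (Neg a)) a).
Proof. decide_tautology. Qed.

Definition subst_pq (a b : form) (n : nat) : form :=
  match n with 0 => a | 1 => b | _ => Var n end.

Section DerivedRules.
Variable chi : form.
Local Notation D := (MS4plus chi).

Lemma mp_tautology a b : tautology (Imp a b) -> D a -> D b.
Proof. by move=> Tab Da; apply: d_mp Da; apply: d_taut. Qed.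

Lemma mp2_tautology a b c :
  tautology (Imp a (Imp b c)) -> D a -> D b -> D c.
Proof. by move=> Tabc Da Db; apply: d_mp Db; apply: mp_tautology Da. Qed.

Lemma imp_trans a b c : D (Imp a b) -> D (Imp b c) -> D (Imp a c).
Proof. by apply: mp2_tautology; decide_tautology. Qed.

Lemma contrapose a b : D (Imp a b) -> D (Imp (Neg b) (Neg a)).
Proof. by apply: mp_tautology; decide_tautology. Qed.

Lemma contrapose_neg a b : D (Imp a (Neg b)) -> D (Imp b (Neg a)).
Proof. by apply: mp_tautology; decide_tautology. Qed.

Lemma box_K a b : D (Imp (Box (Imp a b)) (Imp (Box a) (Box b))).
Proof. exact: (d_subst _ (subst_pq a b) _ (d_ax _ _ ax_K_box)). Qed.

Lemma all_K a b : D (Imp (All (Imp a b)) (Imp (All a) (All b))).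
Proof. exact: (d_subst _ (subst_pq a b) _ (d_ax _ _ ax_K_all)). Qed.

Lemma box_mono a b : D (Imp a b) -> D (Imp (Box a) (Box b)).
Proof. by move=> Dab; apply: d_mp (box_K a b) (d_nec_box _ _ Dab). Qed.

Lemma all_mono a b : D (Imp a b) -> D (Imp (All a) (All b)).
Proof. by move=> Dab; apply: d_mp (all_K a b) (d_nec_all _ _ Dab). Qed.

Lemma box_dneg_intro a : D (Imp (Box a) (Box (Neg (Neg a)))).
Proof. exact/box_mono/d_taut/tautology_dneg_intro. Qed.

Lemma box_dneg_elim a : D (Imp (Box (Neg (Neg a))) (Box a)).
Proof. exact/box_mono/d_taut/tautology_dneg_elim. Qed.

Lemma chi_subst_neg_p : D (subst (subst_pq (Neg p) q) chi).
Proof. exact/d_subst/d_chi. Qed.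

End DerivedRules.

Lemma MS4plus_trans chi1 chi2 f :
  MS4plus chi2 chi1 -> MS4plus chi1 f -> MS4plus chi2 f.
Proof.
move=> D2chi1; elim=> {f} [f Tf | f Af | | a b _ IHab _ IHa | s f _ IHf
                           | f _ IHf | f _ IHf].
- exact: d_taut.
- exact: d_ax.
- exact: D2chi1.
- exact: d_mp IHab IHa.
- exact: d_subst.
- exact: d_nec_box.
- exact: d_nec_all.
Qed.

Lemma MS4plus_equiv chi1 chi2 :
  MS4plus chi1 chi2 -> MS4plus chi2 chi1 ->
  forall f, MS4plus chi1 f <-> MS4plus chi2 f.
Proof. by move=> D1chi2 D2chi1 f; split; apply: MS4plus_trans. Qed.

Lemma chi_N_derives_chi_1 : MS4plus chi_N chi_1.
Proof. exact: imp_trans (d_chi _) (contrapose _ _ _ (box_dneg_intro _ _)). Qed.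

Lemma chi_1_derives_chi_N : MS4plus chi_1 chi_N.
Proof. exact: imp_trans (d_chi _) (contrapose _ _ _ (box_dneg_elim _ _)). Qed.

Lemma chi_N_derives_chi_2 : MS4plus chi_N chi_2.
Proof.
have all_dneg_elim : MS4plus chi_N (Imp (All (Neg (Neg p))) (All p)).
  exact/all_mono/d_taut/tautology_dneg_elim.
apply: imp_trans (box_dneg_intro _ _) _.
apply: imp_trans (contrapose_neg _ _ _ (chi_subst_neg_p chi_N)) _.
exact: contrapose _ _ _ (box_mono _ _ _ (contrapose _ _ _ all_dneg_elim)).
Qed.

Lemma chi_2_derives_chi_N : MS4plus chi_2 chi_N.
Proof.
have box_dneg_elim_p : MS4plus chi_2 (Imp (Neg (Box p)) (Neg (Box (Neg (Neg p))))).
  exact: contrapose _ _ _ (box_dneg_elim _ _).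
apply: imp_trans (contrapose_neg _ _ _ (chi_subst_neg_p chi_2)) _.
apply/contrapose/box_mono.
exact: imp_trans (d_taut _ _ (tautology_dneg_elim _)) (all_mono _ _ _ box_dneg_elim_p).
Qed.

Theorem lemma5p9 :
  (forall f : form, MS4plus chi_N f <-> MS4plus chi_1 f) /\
  (forall f : form, MS4plus chi_N f <-> MS4plus chi_2 f).
Proof.
split; apply: MS4plus_equiv.
- exact: chi_N_derives_chi_1.
- exact: chi_1_derives_chi_N.
- exact: chi_N_derives_chi_2.
- exact: chi_2_derives_chi_N.
Qed.
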